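(* Let $D\ge3$ be an integer, $k\in\{1,0,-1\}$, $\Omega_{k,D-1}>0$, $\alpha^2=\frac{2(D-2)}{D-1}$, and fix temperatures $0<T_{\rm c}<T_{\rm h}$ and volumes $0<V_1<V_2$. Set $T_1\equiv T_{\rm c}$, $T_2\equiv T_{\rm h}$ and, for $i,j\in\{1,2\}$ and electric potential $\tilde\Phi>0$, $$\xi_{ij}=\frac{1}{2^{D-1}}\left[1+\sqrt{1+D(D-2)\left(\frac{\alpha^2\tilde\Phi^2}{4\pi^2T_i^2}-\frac{k}{4\pi^2T_i^2}\left(\frac{\Omega_{k,D-1}}{V_j}\right)^{\frac{2}{D-1}}\right)}\right]^{D-1},$$ $$\chi_{ij}=\xi_{ij}^{\frac{D-2}{D-1}}\left[\xi_{ij}^{\frac{2}{D-1}}+\frac{D^2}{16\pi^2T_i^2}\left(k\left(\frac{\Omega_{k,D-1}}{V_j}\right)^{\frac{2}{D-1}}-\alpha^2\tilde\Phi^2\right)\right].$$ Define $$\eta_{\rm non\text{-}regen}(\tilde\Phi)=1-\frac{T_{\rm c}^D(V_2\xi_{12}-V_1\xi_{11})+\frac{D-1}{D}V_2(T_{\rm h}^D\chi_{22}-T_{\rm c}^D\chi_{12})}{T_{\rm h}^D(V_2\xi_{22}-V_1\xi_{21})+\frac{D-1}{D}V_1(T_{\rm h}^D\chi_{21}-T_{\rm c}^D\chi_{11})},$$ $$\eta_{\rm regen}(\tilde\Phi)=1-\frac{T_{\rm c}^D(V_2\xi_{12}-V_1\xi_{11})+\frac{D-1}{D}\left[V_2(T_{\rm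 h}^D\chi_{22}-T_{\rm c}^D\chi_{12})-V_1(T_{\rm h}^D\chi_{21}-T_{\rm c}^D\chi_{11})\right]}{T_{\rm h}^D(V_2\xi_{22}-V_1\xi_{21})}.$$ Then, as $\tilde\Phi\to\infty$ (with $T_{\rm c},T_{\rm h},V_1,V_2$ fixed), both $\eta_{\rm non\text{-}regen}(\tilde\Phi)=1-\frac{T_{\rm c}}{T_{\rm h}}+\mathcal{O}(\tilde\Phi^{-1})$ and $\eta_{\rm regen}(\tilde\Phi)=1-\frac{T_{\rm c}}{T_{\rm h}}+\mathcal{O}(\tilde\Phi^{-1})$; in particular both tend to the Carnot efficiency $1-T_{\rm c}/T_{\rm h}$.
   Context: These are the Stirling efficiencies (without and with an ideal regenerator) of a thermal state of a $D$-dimensional holographic CFT on a constant-curvature spatial manifold of volume $V=\Omega_{k,D-1}R^{D-1}$ in the grand canonical (fixed electric potential $\tilde\Phi$) ensemble, dual to a $(D+1)$-dimensional AdS-Reissner-Nordström black hole (large, positive heat capacity branch); $k=1,0,-1$ labels spherical, planar, hyperbolic geometry. The cycle has hot isotherm at $T_{\rm h}$, cold isotherm at $T_{\rm c}$, and isochores at volumes $V_1<V_2$, with $\tilde\Phi$ held fixed throughout. *)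

From Stdlib Require Import Reals.
Open Scope R_scope.

Definition Dr (D : nat) : R := INR D.

Definition alpha2 (D : nat) : R := 2 * (Dr D - 2) / (Dr D - 1).

Definition curv (D : nat) (Om V : R) : R := Rpower (Om / V) (2 / (Dr D - 1)).

(* xi_{ij} with T = T_i, V = V_j, Phi = electric potential *)
Definition xi (D : nat) (k Om T V Phi : R) : R :=
  / 2 ^ (D - 1) *
  (1 + sqrt (1 + Dr D * (Dr D - 2) *
       (alpha2 D * Phi ^ 2 / (4 * PI ^ 2 * T ^ 2)
        - k / (4 * PI ^ 2 * T ^ 2) * curv D Om V))) ^ (D - 1).

Definition chi (D : nat) (k Om T V Phi : R) : R :=
  let x := xi D k Om T V Phi in
  Rpower x ((Dr D - 2) / (Dr D - 1)) *
  (Rpower x (2 / (Dr D - 1))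
   + Dr D ^ 2 / (16 * PI ^ 2 * T ^ 2) * (k * curv D Om V - alpha2 D * Phi ^ 2)).

Definition eta_nonregen (D : nat) (k Om Tc Th V1 V2 Phi : R) : R :=
  let xi11 := xi D k Om Tc V1 Phi in
  let xi12 := xi D k Om Tc V2 Phi in
  let xi21 := xi D k Om Th V1 Phi in
  let xi22 := xi D k Om Th V2 Phi in
  let chi11 := chi D k Om Tc V1 Phi in
  let chi12 := chi D k Om Tc V2 Phi in
  let chi21 := chi D k Om Th V1 Phi in
  let chi22 := chi D k Om Th V2 Phi in
  1 - (Tc ^ D * (V2 * xi12 - V1 * xi11)
       + (Dr D - 1) / Dr D * V2 * (Th ^ D * chi22 - Tc ^ D * chi12))
      / (Th ^ D * (V2 * xi22 - V1 * xi21)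
       + (Dr D - 1) / Dr D * V1 * (Th ^ D * chi21 - Tc ^ D * chi11)).

Definition eta_regen (D : nat) (k Om Tc Th V1 V2 Phi : R) : R :=
  let xi11 := xi D k Om Tc V1 Phi in
  let xi12 := xi D k Om Tc V2 Phi in
  let xi21 := xi D k Om Th V1 Phi in
  let xi22 := xi D k Om Th V2 Phi in
  let chi11 := chi D k Om Tc V1 Phi in
  let chi12 := chi D k Om Tc V2 Phi in
  let chi21 := chi D k Om Th V1 Phi in
  let chi22 := chi D k Om Th V2 Phi in
  1 - (Tc ^ D * (V2 * xi12 - V1 * xi11)
       + (Dr D - 1) / Dr D * (V2 * (Th ^ D * chi22 - Tc ^ D * chi12)
                               - V1 * (Th ^ D * chi21 - Tc ^ D * chi11)))
      / (Th ^ D * (V2 * xi22 - V1 * xi21)).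

(* For fixed T and V, T xi^(1/(D-1)) = (T + sqrt (A + (2 b Phi)^2)) / 2 for a constant A, where
   b = xi_slope D depends on D only; hence T xi^(1/(D-1)) = b Phi (1 + O(1/Phi)).  Dividing by
   (b Phi)^(D-1) gives T^D xi = T + O(1/Phi) and T^D chi = b Phi (1 - D/(D-2)) + O(1/Phi): for chi
   the corrections of first order in the relative error cancel exactly, so the divergent term is
   the same for all four states of the cycle and drops out of the differences of chi's.  Hence
   both efficiencies are 1 - (Tc (V2 - V1) + O(1/Phi)) / (Th (V2 - V1) + O(1/Phi)). *)

From Stdlib Require Import Reals Lra Lia.
From Coquelicot Require Import Coquelicot.
Open Scope R_scope.

Notation at_infty := (Rbar_locally p_infty).

Definition O_inv (f : R -> R) : Prop :=
  exists C, at_infty (fun x => Rabs (f x) <= C / x).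

Definition bounded_at_infty (f : R -> R) : Prop :=
  exists B, at_infty (fun x => Rabs (f x) <= B).

Lemma at_infty_gt (M : R) : at_infty (fun x => M < x).
Proof. now exists M. Qed.

Lemma O_inv_ext (f g : R -> R) :
  at_infty (fun x => f x = g x) -> O_inv f -> O_inv g.
Proof.
  intros Hfg [C Hf]; exists C.
  generalize (filter_and _ _ Hfg Hf); apply filter_imp.
  now intros x [<- H].
Qed.

Lemma O_inv_plus (f g : R -> R) :
  O_inv f -> O_inv g -> O_inv (fun x => f x + g x).
Proof.
  intros [C Hf] [C' Hg]; exists (C + C').
  generalize (filter_and _ _ Hf Hg); apply filter_imp; intros x [H1 H2].
  eapply Rle_trans; [apply Rabs_triang|].
  unfold Rdiv in *; rewrite Rmult_plus_distr_r; lra.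
Qed.

Lemma O_inv_scal (c : R) (f : R -> R) :
  O_inv f -> O_inv (fun x => c * f x).
Proof.
  intros [C Hf]; exists (Rabs c * C).
  revert Hf; apply filter_imp; intros x H.
  rewrite Rabs_mult; unfold Rdiv; rewrite Rmult_assoc.
  apply Rmult_le_compat_l; [apply Rabs_pos | exact H].
Qed.

Lemma O_inv_opp (f : R -> R) : O_inv f -> O_inv (fun x => - f x).
Proof.
  intros Hf; apply O_inv_ext with (fun x => -1 * f x).
  - apply filter_forall; intros x; ring.
  - now apply O_inv_scal.
Qed.

Lemma O_inv_minus (f g : R -> R) :
  O_inv f -> O_inv g -> O_inv (fun x => f x - g x).
Proof. intros Hf Hg; now apply O_inv_plus, O_inv_opp. Qed.

Lemma O_inv_one_sub (f : R -> R) (c : R) :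
  O_inv (fun x => f x - c) -> O_inv (fun x => 1 - f x - (1 - c)).
Proof.
  intros Hf; apply O_inv_ext with (fun x => - (f x - c)).
  - apply filter_forall; intros x; ring.
  - now apply O_inv_opp.
Qed.

Lemma O_inv_mult_bounded (f g : R -> R) :
  O_inv f -> bounded_at_infty g -> O_inv (fun x => f x * g x).
Proof.
  intros [C Hf] [B Hg]; exists (C * B).
  generalize (filter_and _ _ Hf Hg); apply filter_imp; intros x [H1 H2].
  rewrite Rabs_mult; replace (C * B / x) with (C / x * B) by (unfold Rdiv; ring).
  apply Rmult_le_compat; auto using Rabs_pos.
Qed.

Lemma O_inv_div_id (f : R -> R) :
  bounded_at_infty f -> O_inv (fun x => f x / x).
Proof.
  intros [B Hf]; exists B.
  generalize (filter_and _ _ Hf (at_infty_gt 0)); apply filter_imp; intros x [H Hx].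
  unfold Rdiv; rewrite Rabs_mult, Rabs_inv, (Rabs_pos_eq x) by lra.
  apply Rmult_le_compat_r; [left; apply Rinv_0_lt_compat|]; lra.
Qed.

Lemma bounded_const (c : R) : bounded_at_infty (fun _ => c).
Proof. exists (Rabs c); now apply filter_forall. Qed.

Lemma bounded_plus (f g : R -> R) :
  bounded_at_infty f -> bounded_at_infty g -> bounded_at_infty (fun x => f x + g x).
Proof.
  intros [B Hf] [B' Hg]; exists (B + B').
  generalize (filter_and _ _ Hf Hg); apply filter_imp; intros x [H1 H2].
  eapply Rle_trans; [apply Rabs_triang | lra].
Qed.

Lemma O_inv_bounded (f : R -> R) : O_inv f -> bounded_at_infty f.
Proof.
  intros [C Hf]; exists (Rabs C).
  generalize (filter_and _ _ Hf (at_infty_gt 1)); apply filter_imp; intros x [H Hx].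
  assert (Hy : 0 < / x) by (apply Rinv_0_lt_compat; lra).
  assert (Hxy : x * / x = 1) by (field; lra).
  pose proof (Rle_abs C); pose proof (Rabs_pos C).
  unfold Rdiv in H; nra.
Qed.

Lemma bounded_mult_id (f : R -> R) :
  O_inv f -> bounded_at_infty (fun x => x * f x).
Proof.
  intros [C Hf]; exists C.
  generalize (filter_and _ _ Hf (at_infty_gt 0)); apply filter_imp; intros x [H Hx].
  rewrite Rabs_mult, (Rabs_pos_eq x) by lra.
  replace C with (x * (C / x)) by (field; lra).
  apply Rmult_le_compat_l; lra.
Qed.

Lemma O_inv_small (f : R -> R) (eps : R) :
  0 < eps -> O_inv f -> at_infty (fun x => Rabs (f x) <= eps).
Proof.
  intros Heps [C Hf].
  generalize (filter_and _ _ Hf (at_infty_gt (Rabs C / eps + 1))); apply filter_imp.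
  intros x [H Hx].
  assert (HC : Rabs C / eps * eps = Rabs C) by (field; lra).
  pose proof (Rle_abs C); pose proof (Rabs_pos C).
  assert (0 <= Rabs C / eps) by (apply Rdiv_le_0_compat; lra).
  eapply Rle_trans; [exact H|].
  apply (Rmult_le_reg_r x); [lra|]; unfold Rdiv; rewrite Rmult_assoc, Rinv_l by lra.
  nra.
Qed.

Lemma O_inv_ratio (p n d : R -> R) (a b : R) :
  b <> 0 -> at_infty (fun x => p x <> 0) ->
  O_inv (fun x => n x / p x - a) -> O_inv (fun x => d x / p x - b) ->
  O_inv (fun x => n x / d x - a / b).
Proof.
  intros Hb Hp Hn Hd.
  assert (Hb2 : 0 < Rabs b / 2) by (pose proof (Rabs_pos_lt b Hb); lra).
  assert (Hfar : at_infty (fun x => Rabs b / 2 <= Rabs (d x / p x))).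
  { generalize (O_inv_small _ _ Hb2 Hd); apply filter_imp; intros x H.
    pose proof (Rabs_triang_inv b (d x / p x)); rewrite Rabs_minus_sym in H; lra. }
  apply O_inv_ext with (fun x => (b * (n x / p x - a) - a * (d x / p x - b)) * / (b * (d x / p x))).
  - generalize (filter_and _ _ Hp Hfar); apply filter_imp; intros x [Hpx Hdx].
    assert (d x <> 0) by (intros E; rewrite E, Rdiv_0_l, Rabs_R0 in Hdx; lra).
    field; auto.
  - apply O_inv_mult_bounded.
    + apply O_inv_minus; apply O_inv_scal; assumption.
    + exists (/ (Rabs b * (Rabs b / 2))).
      revert Hfar; apply filter_imp; intros x Hdx.
      rewrite Rabs_inv, Rabs_mult.
      apply Rinv_le_contravar; [nra|].
      apply Rmult_le_compat_l; [apply Rabs_pos | exact Hdx].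
Qed.

Lemma O_inv_pow_sub1 (u : R -> R) (n : nat) :
  O_inv u -> O_inv (fun x => (1 + u x) ^ n - 1).
Proof.
  intros Hu; induction n as [|n IH].
  - exists 0; apply filter_forall; intros x.
    rewrite Rdiv_0_l; simpl; rewrite Rminus_diag, Rabs_R0; lra.
  - apply O_inv_ext with (fun x => ((1 + u x) ^ n - 1) * (1 + u x) + u x).
    + apply filter_forall; intros x; simpl; ring.
    + apply O_inv_plus; [apply O_inv_mult_bounded|]; auto.
      apply bounded_plus; [apply bounded_const | now apply O_inv_bounded].
Qed.

Lemma O_inv_pow_taylor (u : R -> R) (n : nat) :
  O_inv u -> O_inv (fun x => x * ((1 + u x) ^ n - 1 - INR n * u x)).
Proof.
  intros Hu; induction n as [|n IH].
  - exists 0; apply filter_forall; intros x.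
    rewrite Rdiv_0_l; simpl; replace (x * (1 - 1 - 0 * u x)) with 0 by ring.
    rewrite Rabs_R0; lra.
  - apply O_inv_ext with
      (fun x => x * ((1 + u x) ^ n - 1 - INR n * u x) * (1 + u x) + INR n * (u x * (x * u x))).
    + apply filter_forall; intros x; rewrite S_INR; simpl; ring.
    + apply O_inv_plus; [apply O_inv_mult_bounded | apply O_inv_scal, O_inv_mult_bounded]; auto.
      * apply bounded_plus; [apply bounded_const | now apply O_inv_bounded].
      * now apply bounded_mult_id.
Qed.

Lemma sqrt_shift_O_inv (A c : R) :
  0 < c -> O_inv (fun x => sqrt (A + (c * x) ^ 2) - c * x).
Proof.
  intros Hc; exists (Rabs A / c).
  apply (filter_imp (fun x => 1 + Rabs A / c ^ 2 < x)); [|apply at_infty_gt].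
  intros x Hx.
  assert (Hc2 : 0 < c ^ 2) by (apply pow_lt; lra).
  assert (0 <= Rabs A / c ^ 2) by (apply Rdiv_le_0_compat; [apply Rabs_pos | lra]).
  assert (Hx0 : 0 < x) by lra.
  assert (Hrad : 0 <= A + (c * x) ^ 2).
  { assert (HA : Rabs A < c ^ 2 * x).
    { replace (Rabs A) with (c ^ 2 * (Rabs A / c ^ 2)) by (field; lra).
      apply Rmult_lt_compat_l; [apply pow_lt|]; lra. }
    assert (c ^ 2 * x <= (c * x) ^ 2).
    { replace ((c * x) ^ 2) with (c ^ 2 * x * x) by ring.
      rewrite <- (Rmult_1_r (c ^ 2 * x)) at 1.
      apply Rmult_le_compat_l; [apply Rmult_le_pos|]; lra. }
    pose proof (Rle_abs (- A)); rewrite Rabs_Ropp in *; lra. }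
  set (s := sqrt (A + (c * x) ^ 2)).
  assert (Hs : s * s = A + (c * x) ^ 2) by apply sqrt_sqrt, Hrad.
  assert (Hs0 : 0 <= s) by apply sqrt_pos.
  assert (Hcx : 0 < c * x) by nra.
  replace (s - c * x) with (A / (s + c * x)) by (field_simplify_eq; nra).
  replace (Rabs A / c / x) with (Rabs A / (c * x)) by (field; lra).
  unfold Rdiv; rewrite Rabs_mult, Rabs_inv, (Rabs_pos_eq (s + c * x)) by lra.
  apply Rmult_le_compat_l; [apply Rabs_pos|].
  apply Rinv_le_contravar; lra.
Qed.

Section Scaled_powers.

Variables (b : R) (z : R -> R).
Hypothesis Hb : b <> 0.
Hypothesis Hz : O_inv (fun x => z x / (b * x) - 1).

Lemma scaled_pow_O_inv (T : R) (n : nat) :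
  O_inv (fun x => T * z x ^ n / (b * x) ^ n - T).
Proof.
  apply O_inv_ext with (fun x => T * ((1 + (z x / (b * x) - 1)) ^ n - 1)).
  - apply (filter_imp (fun x => 0 < x)); [|apply at_infty_gt]; intros x Hx.
    assert (Hbx : b * x <> 0) by (apply Rmult_integral_contrapositive; lra).
    set (w := z x / (b * x)).
    assert (Hzw : z x = w * (b * x)) by (unfold w; field; split; lra).
    rewrite Hzw, Rpow_mult_distr; replace (1 + (w - 1)) with w by ring.
    field; apply pow_nonzero, Hbx.
  - now apply O_inv_scal, O_inv_pow_sub1.
Qed.

Lemma scaled_chi_O_inv (kap : R) (n : nat) : (0 < n)%nat ->
  O_inv (fun x => z x ^ n * (z x ^ 2 - INR (S (S n)) / INR n * (b * x) ^ 2 + kap)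
                  / (b * x) ^ S n - b * x * (1 - INR (S (S n)) / INR n)).
Proof.
  intros Hn.
  (* With u = z/(bx) - 1 the expression is
       b x ((1+u)^(n+2) - r (1+u)^n - 1 + r) + kap (1+u)^n / (bx),
     whose part linear in u vanishes because n r = n + 2. *)
  set (r := INR (S (S n)) / INR n).
  set (u := fun x => z x / (b * x) - 1).
  apply O_inv_ext with (fun x =>
      b * (x * ((1 + u x) ^ S (S n) - 1 - INR (S (S n)) * u x))
      - r * b * (x * ((1 + u x) ^ n - 1 - INR n * u x))
      + (kap / b * ((1 + u x) ^ n - 1) + kap / b) / x).
  - apply (filter_imp (fun x => 0 < x)); [|apply at_infty_gt]; intros x Hx.
    assert (Hbx : b * x <> 0) by (apply Rmult_integral_contrapositive; lra).
    assert (INR n <> 0) by (apply not_0_INR; lia).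
    unfold u; set (w := z x / (b * x)).
    assert (Hzw : z x = w * (b * x)) by (unfold w; field; split; lra).
    rewrite Hzw; replace (1 + (w - 1)) with w by ring.
    unfold r; rewrite Rpow_mult_distr; simpl pow; rewrite !S_INR.
    field; repeat split; try lra; apply pow_nonzero, Hbx.
  - apply O_inv_plus; [apply O_inv_minus; apply O_inv_scal, O_inv_pow_taylor, Hz|].
    apply O_inv_div_id, bounded_plus; [|apply bounded_const].
    now apply O_inv_bounded, O_inv_scal, O_inv_pow_sub1.
Qed.

End Scaled_powers.

Lemma Rpower_pow_frac (w : R) (m n : nat) :
  0 < w -> (0 < n)%nat -> Rpower (w ^ n) (INR m / INR n) = w ^ m.
Proof.
  intros Hw Hn; unfold Rpower; rewrite ln_pow by exact Hw.
  assert (INR n <> 0) by (apply not_0_INR; lia).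
  replace (INR m / INR n * (INR n * ln w)) with (INR m * ln w) by (field; auto).
  now rewrite <- (Rpower_pow m w Hw).
Qed.

Definition xi_root (D : nat) (k Om T V Phi : R) : R :=
  (1 + sqrt (1 + Dr D * (Dr D - 2) *
       (alpha2 D * Phi ^ 2 / (4 * PI ^ 2 * T ^ 2)
        - k / (4 * PI ^ 2 * T ^ 2) * curv D Om V))) / 2.

Lemma xi_root_pow (D : nat) (k Om T V Phi : R) :
  xi D k Om T V Phi = xi_root D k Om T V Phi ^ (D - 1).
Proof. unfold xi, xi_root, Rdiv; rewrite Rpow_mult_distr, pow_inv; ring. Qed.

Lemma xi_root_pos (D : nat) (k Om T V Phi : R) : 0 < xi_root D k Om T V Phi.
Proof.
  apply Rdiv_lt_0_compat; [apply Rplus_lt_le_0_compat; [lra | apply sqrt_pos] | lra].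
Qed.

Lemma chi_root_pow (n : nat) (k Om T V Phi : R) :
  chi (S (S n)) k Om T V Phi =
  xi_root (S (S n)) k Om T V Phi ^ n
  * (xi_root (S (S n)) k Om T V Phi ^ 2 + Dr (S (S n)) ^ 2 / (16 * PI ^ 2 * T ^ 2)
                   * (k * curv (S (S n)) Om V - alpha2 (S (S n)) * Phi ^ 2)).
Proof.
  unfold chi; rewrite xi_root_pow.
  assert (E1 : (Dr (S (S n)) - 2) / (Dr (S (S n)) - 1) = INR n / INR (S n))
    by (unfold Dr; rewrite !S_INR; f_equal; ring).
  assert (E2 : 2 / (Dr (S (S n)) - 1) = INR 2 / INR (S n))
    by (unfold Dr; rewrite !S_INR; simpl INR; f_equal; ring).
  rewrite E1, E2, !Rpower_pow_frac by (apply xi_root_pos || lia); reflexivity.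
Qed.

Definition xi_slope (D : nat) : R := sqrt (Dr D * (Dr D - 2) * alpha2 D) / (4 * PI).

Lemma xi_slope_sqr (n : nat) :
  (4 * PI * xi_slope (S (S n))) ^ 2 = Dr (S (S n)) * (Dr (S (S n)) - 2) * alpha2 (S (S n)).
Proof.
  pose proof PI_RGT_0; unfold xi_slope.
  replace (4 * PI * (sqrt (Dr (S (S n)) * (Dr (S (S n)) - 2) * alpha2 (S (S n))) / (4 * PI)))
    with (sqrt (Dr (S (S n)) * (Dr (S (S n)) - 2) * alpha2 (S (S n)))) by (field; lra).
  apply pow2_sqrt; unfold alpha2, Dr; rewrite !S_INR.
  pose proof (pos_INR n).
  replace (INR n + 1 + 1 - 2) with (INR n) by ring.
  apply Rmult_le_pos; [nra|].
  apply Rdiv_le_0_compat; lra.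
Qed.

Lemma xi_slope_pos (n : nat) : (0 < n)%nat -> 0 < xi_slope (S (S n)).
Proof.
  intros Hn; pose proof PI_RGT_0; unfold xi_slope.
  apply Rdiv_lt_0_compat; [|lra].
  apply sqrt_lt_R0; unfold alpha2, Dr; rewrite !S_INR.
  pose proof (lt_0_INR n Hn).
  replace (INR n + 1 + 1 - 2) with (INR n) by ring.
  apply Rmult_lt_0_compat; [nra|].
  apply Rdiv_lt_0_compat; lra.
Qed.

Lemma xi_root_O_inv (n : nat) (k Om T V : R) : (0 < n)%nat -> 0 < T ->
  O_inv (fun x => T * xi_root (S (S n)) k Om T V x / (xi_slope (S (S n)) * x) - 1).
Proof.
  intros Hn HT; pose proof PI_RGT_0.
  pose proof (xi_slope_pos n Hn) as Hb.
  pose proof (xi_slope_sqr n) as Hb2.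
  set (D := S (S n)) in *; set (b := xi_slope D) in *; set (c := curv D Om V).
  set (A := T ^ 2 - Dr D * (Dr D - 2) * k * c / (4 * PI ^ 2)).
  assert (Hroot : forall x, T * xi_root D k Om T V x = (T + sqrt (A + (2 * b * x) ^ 2)) / 2).
  { intros x; unfold xi_root; fold c.
    replace (A + (2 * b * x) ^ 2) with (T ^ 2 * (1 + Dr D * (Dr D - 2) *
       (alpha2 D * x ^ 2 / (4 * PI ^ 2 * T ^ 2) - k / (4 * PI ^ 2 * T ^ 2) * c))).
    - rewrite sqrt_mult_alt, sqrt_pow2 by (try apply pow2_ge_0; lra); field.
    - replace ((2 * b * x) ^ 2) with ((4 * PI * b) ^ 2 * x ^ 2 / (4 * PI ^ 2)) by (field; lra).
      rewrite Hb2; unfold A; field; lra. }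
  apply O_inv_ext with
    (fun x => (T / (2 * b) + / (2 * b) * (sqrt (A + (2 * b * x) ^ 2) - 2 * b * x)) / x).
  - apply (filter_imp (fun x => 0 < x)); [|apply at_infty_gt]; intros x Hx.
    rewrite Hroot; field; lra.
  - apply O_inv_div_id, bounded_plus; [apply bounded_const|].
    apply O_inv_bounded, O_inv_scal, sqrt_shift_O_inv; lra.
Qed.

Lemma xi_O_inv (n : nat) (k Om T V : R) : (0 < n)%nat -> 0 < T ->
  O_inv (fun x => T ^ S (S n) * xi (S (S n)) k Om T V x / (xi_slope (S (S n)) * x) ^ S n - T).
Proof.
  intros Hn HT.
  apply O_inv_ext with
    (fun x => T * (T * xi_root (S (S n)) k Om T V x) ^ S n / (xi_slope (S (S n)) * x) ^ S n - T).
  - apply filter_forall; intros x.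
    rewrite xi_root_pow, Rpow_mult_distr; cbn [pow Nat.sub]; unfold Rdiv; ring.
  - apply scaled_pow_O_inv; [apply Rgt_not_eq, xi_slope_pos, Hn | now apply xi_root_O_inv].
Qed.

Lemma chi_O_inv (n : nat) (k Om T V : R) : (0 < n)%nat -> 0 < T ->
  O_inv (fun x => T ^ S (S n) * chi (S (S n)) k Om T V x / (xi_slope (S (S n)) * x) ^ S n
                  - xi_slope (S (S n)) * x * (1 - INR (S (S n)) / INR n)).
Proof.
  intros Hn HT; pose proof PI_RGT_0.
  pose proof (xi_slope_pos n Hn) as Hb.
  pose proof (xi_slope_sqr n) as Hb2.
  set (D := S (S n)) in *; set (b := xi_slope D) in *.
  set (kap := Dr D ^ 2 * k * curv D Om V / (16 * PI ^ 2)).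
  apply O_inv_ext with (fun x =>
    (T * xi_root D k Om T V x) ^ n
    * ((T * xi_root D k Om T V x) ^ 2 - INR (S (S n)) / INR n * (b * x) ^ 2 + kap)
    / (b * x) ^ S n - b * x * (1 - INR (S (S n)) / INR n)).
  - apply (filter_imp (fun x => 0 < x)); [|apply at_infty_gt]; intros x Hx.
    assert (Hn0 : 0 < INR n) by (apply lt_0_INR; lia).
    assert (Hr : INR (S (S n)) / INR n * b ^ 2 = Dr D ^ 2 * alpha2 D / (16 * PI ^ 2)).
    { assert (Hpi2 : 0 < 16 * PI ^ 2) by (apply Rmult_lt_0_compat; [lra | apply pow_lt; lra]).
      apply (Rmult_eq_reg_l (16 * PI ^ 2 * INR n)); [|apply Rgt_not_eq, Rmult_lt_0_compat; lra].
      replace (16 * PI ^ 2 * INR n * (INR (S (S n)) / INR n * b ^ 2))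
        with (INR (S (S n)) * (4 * PI * b) ^ 2) by (field; lra).
      rewrite Hb2; unfold Dr, D; rewrite !S_INR; field; lra. }
    replace (INR (S (S n)) / INR n * (b * x) ^ 2) with (Dr D ^ 2 * alpha2 D / (16 * PI ^ 2) * x ^ 2)
      by (rewrite <- Hr; ring).
    unfold kap, D; rewrite chi_root_pow, !Rpow_mult_distr; cbn [pow].
    field; repeat split; try lra; apply pow_nonzero; lra.
  - apply scaled_chi_O_inv; [lra | now apply xi_root_O_inv | exact Hn].
Qed.

Section Stirling.

Variables (D : nat) (k Om Tc Th V1 V2 : R) (P Q : R -> R).
Hypothesis HTc : 0 < Tc.
Hypothesis HTh : 0 < Th.
Hypothesis HV : V1 <> V2.
Hypothesis HP : at_infty (fun x => P x <> 0).

Local Notation X T V x := (T ^ D * xi D k Om T V x / P x).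
Local Notation Y T V x := (T ^ D * chi D k Om T V x / P x).

Hypothesis Hxi : forall T V, 0 < T -> O_inv (fun x => X T V x - T).
Hypothesis Hchi : forall T V, 0 < T -> O_inv (fun x => Y T V x - Q x).

Let q := (Dr D - 1) / Dr D.

Local Ltac O_inv_closure :=
  repeat first [ apply Hxi; assumption | apply Hchi; assumption
               | apply O_inv_minus | apply O_inv_plus | apply O_inv_scal ].

Let HPV : at_infty (fun x => P x * (V2 - V1) <> 0).
Proof.
  revert HP; apply filter_imp; intros x Hx.
  apply Rmult_integral_contrapositive; split; [exact Hx | lra].
Qed.

Lemma eta_nonregen_O_inv :
  O_inv (fun x => eta_nonregen D k Om Tc Th V1 V2 x - (1 - Tc / Th)).
Proof.
  unfold eta_nonregen; cbv zeta; fold q.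
  apply O_inv_one_sub, (O_inv_ratio (fun x => P x * (V2 - V1))); [lra | exact HPV | |].
  - apply O_inv_ext with (fun x => / (V2 - V1) *
      (V2 * (X Tc V2 x - Tc) - V1 * (X Tc V1 x - Tc)
       + q * V2 * ((Y Th V2 x - Q x) - (Y Tc V2 x - Q x)))).
    + revert HP; apply filter_imp; intros x Hx; field; split; [lra | exact Hx].
    + O_inv_closure.
  - apply O_inv_ext with (fun x => / (V2 - V1) *
      (V2 * (X Th V2 x - Th) - V1 * (X Th V1 x - Th)
       + q * V1 * ((Y Th V1 x - Q x) - (Y Tc V1 x - Q x)))).
    + revert HP; apply filter_imp; intros x Hx; field; split; [lra | exact Hx].
    + O_inv_closure.
Qed.

Lemma eta_regen_O_inv :
  O_inv (fun x => eta_regen D k Om Tc Th V1 V2 x - (1 - Tc / Th)).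
Proof.
  unfold eta_regen; cbv zeta; fold q.
  apply O_inv_one_sub, (O_inv_ratio (fun x => P x * (V2 - V1))); [lra | exact HPV | |].
  - apply O_inv_ext with (fun x => / (V2 - V1) *
      (V2 * (X Tc V2 x - Tc) - V1 * (X Tc V1 x - Tc)
       + q * (V2 * ((Y Th V2 x - Q x) - (Y Tc V2 x - Q x))
              - V1 * ((Y Th V1 x - Q x) - (Y Tc V1 x - Q x))))).
    + revert HP; apply filter_imp; intros x Hx; field; split; [lra | exact Hx].
    + O_inv_closure.
  - apply O_inv_ext with (fun x => / (V2 - V1) * (V2 * (X Th V2 x - Th) - V1 * (X Th V1 x - Th))).
    + revert HP; apply filter_imp; intros x Hx; field; split; [lra | exact Hx].
    + O_inv_closure.
Qed.

End Stirling.

Lemma O_inv_bound (f : R -> R) : O_inv f ->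
  exists C M : R, 0 < M /\ forall x : R, M < x -> Rabs (f x) <= C / x.
Proof.
  intros [C [M HM]]; exists C, (Rmax 1 M); split.
  - pose proof (Rmax_l 1 M); lra.
  - intros x Hx; apply HM; eapply Rle_lt_trans; [apply Rmax_r | exact Hx].
Qed.

Theorem mainTheorem3 (D : nat) (k Om Tc Th V1 V2 : R) :
  (3 <= D)%nat ->
  (k = 1 \/ k = 0 \/ k = -1) ->
  0 < Om ->
  0 < Tc -> Tc < Th ->
  0 < V1 -> V1 < V2 ->
  (exists C M : R, 0 < M /\
     forall Phi : R, M < Phi ->
       Rabs (eta_nonregen D k Om Tc Th V1 V2 Phi - (1 - Tc / Th)) <= C / Phi) /\
  (exists C M : R, 0 < M /\
     forall Phi : R, M < Phi ->
       Rabs (eta_regen D k Om Tc Th V1 V2 Phi - (1 - Tc / Th)) <= C / Phi).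
Proof.
  (* k, Om and the volumes enter only through the constants curv D Om V. *)
  intros HD _ _ HTc HTh _ HV.
  destruct D as [|[|n]]; [lia | lia |].
  assert (Hn : (0 < n)%nat) by lia.
  set (b := xi_slope (S (S n))).
  pose (P x := (b * x) ^ S n).
  pose (Q x := b * x * (1 - INR (S (S n)) / INR n)).
  assert (HP : at_infty (fun x => P x <> 0)).
  { apply (filter_imp (fun x => 0 < x)); [|apply at_infty_gt]; intros x Hx.
    apply pow_nonzero, Rgt_not_eq, Rmult_lt_0_compat; [apply xi_slope_pos, Hn | exact Hx]. }
  assert (Hxi : forall T V, 0 < T ->
            O_inv (fun x => T ^ S (S n) * xi (S (S n)) k Om T V x / P x - T))
    by (intros; now apply xi_O_inv).
  assert (Hchi : forall T V, 0 < T ->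
            O_inv (fun x => T ^ S (S n) * chi (S (S n)) k Om T V x / P x - Q x))
    by (intros; now apply chi_O_inv).
  split; apply O_inv_bound.
  - apply (eta_nonregen_O_inv _ _ _ _ _ _ _ P Q); auto; lra.
  - apply (eta_regen_O_inv _ _ _ _ _ _ _ P Q); auto; lra.
Qed.
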